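(* Let $F:\mathbb{R}^2\to\mathbb{R}^2$ be a CPwL map with $F(E(t))=E(r(t))$ for all $t\in[0,1]$, let $\mathcal E(x,y)=(E(x),E(y))$ and $\mathcal F(z_1,z_2)=(F(z_1),F(z_2))$, and set $z_n(x,y)=\mathcal F^n(\mathcal E(x,y))$ for $(x,y)\in[0,1]^2$. Then there exist constants $C_0,C_1>0$, depending only on the piecewise-affine complexities of $E$ and $F$, such that $z_n$ (as a function on $[0,1]^2$) is the restriction of a network in $\Upsilon_{C_0,\,C_1n}(\mathrm{ReLU};2,4)$ for every $n\ge0$.
   Context: For integers $W,L,d,N\ge 1$, $\Upsilon_{W,L}(\mathrm{ReLU};d,N)$ denotes the set of functions $\mathbb{R}^d\to\mathbb{R}^N$ realized (exactly) by fully connected feed-forward ReLU networks of width $W$ and depth $L$. CPwL means continuous piecewise linear. $r:[0,1]\to[0,1]$ is $r(t)=2t-\lfloor 2t\rfloor$ for $t\in[0,1)$, $r(1)=1$. $E:[0,1]\to\mathbb{R}^2$ is $E(t)=(3t,3t)$ for $0\le t\le\frac13$, $E(t)=(1,2-3t)$ for $\frac13\le t\le\frac23$, $E(t)=(3-3t,0)$ for $\frac23\le t\le1$. *)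

From HB Require Import structures.
From mathcomp Require Import all_boot all_order all_algebra.
From mathcomp Require Import all_classical all_reals all_analysis.
From mathcomp Require Import Rstruct Rstruct_topology.
From Stdlib Require Import Rdefinitions.
Set Implicit Arguments. Unset Strict Implicit. Unset Printing Implicit Defensive.
Import Order.TTheory GRing.Theory Num.Theory.
Local Open Scope ring_scope.

Notation RR := Rdefinitions.R.

Definition relu_vec (n : nat) (v : 'rV[RR]_n) : 'rV[RR]_n :=
  map_mx (fun a => Num.max a 0) v.

Fixpoint hidden (d W : nat) (A0 : 'M[RR]_(d, W)) (b0 : 'rV[RR]_W)
  (Ah : nat -> 'M[RR]_(W, W)) (bh : nat -> 'rV[RR]_W) (k : nat)
  (x : 'rV[RR]_d) : 'rV[RR]_W :=
  match k with
  | 0 => relu_vec (x *m A0 + b0)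
  | k'.+1 => relu_vec (hidden A0 b0 Ah bh k' x *m Ah k' + bh k')
  end.

(** Upsilon W L d N : functions R^d -> R^N realized exactly by a fully
    connected feed-forward ReLU network of width W and depth L
    (L hidden layers of W neurons each, followed by an affine output layer;
    depth 0 = affine map). *)
Definition Upsilon (W L d N : nat) (f : 'rV[RR]_d -> 'rV[RR]_N) : Prop :=
  match L with
  | 0 => exists (A : 'M[RR]_(d, N)) (b : 'rV[RR]_N), forall x, f x = x *m A + b
  | L'.+1 =>
      exists (A0 : 'M[RR]_(d, W)) (b0 : 'rV[RR]_W)
             (Ah : nat -> 'M[RR]_(W, W)) (bh : nat -> 'rV[RR]_W)
             (Ao : 'M[RR]_(W, N)) (bo : 'rV[RR]_N),
        forall x, f x = hidden A0 b0 Ah bh L' x *m Ao + bo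
  end.

Definition cpwl_pieces (k : nat) (F : 'rV[RR]_2 -> 'rV[RR]_2) : Prop :=
  continuous F /\
  exists (As : 'I_k -> 'M[RR]_(2, 2)) (bs : 'I_k -> 'rV[RR]_2),
    forall x, exists i : 'I_k, F x = x *m As i + bs i.

Definition vec2 (a b : RR) : 'rV[RR]_2 :=
  \row_(i < 2) (if i == 0 :> nat then a else b).

Definition rmap (t : RR) : RR :=
  if t < 1 then 2 * t - (Num.floor (2 * t))%:~R else 1.

(** The map E : [0,1] -> R^2 (formula extended to all of R; only its values
    on [0,1] are ever used). *)
Definition Emap (t : RR) : 'rV[RR]_2 :=
  if t <= 1/3 then vec2 (3 * t) (3 * t)
  else if t <= 2/3 then vec2 1 (2 - 3 * t)
  else vec2 (3 - 3 * t) 0.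

Definition zn (F : 'rV[RR]_2 -> 'rV[RR]_2) (n : nat) (x y : RR) : 'rV[RR]_4 :=
  row_mx (iter n F (Emap x)) (iter n F (Emap y)).
Arguments Upsilon W L d N f : clear implicits.

(* Since F (E t) = E (r t) on [0,1] and r maps [0,1] into itself,
   z_n (x, y) = (E (r^n x), E (r^n y)); neither the behaviour of F off the
   curve E nor its number of affine pieces matters.  One ReLU layer of width 7
   followed by a fixed affine readout computes E on [0,1]; a second kind of
   layer, fed with the readout E s of the previous one, produces a vector whose
   readout is E (r s); a third kind reproduces any point of the nonnegative
   quadrant.  One layer of the first kind, n of the second and padding with
   the third compute E o r^n on [0,1] with width 7 and any depth > n; two such
   networks side by side compute z_n. *)
From mathcomp Require Import all_boot all_order all_algebra.
From mathcomp Require Import all_classical all_reals all_analysis.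
From mathcomp Require Import Rstruct Rstruct_topology.
From mathcomp Require Import lra zify.

Set Implicit Arguments.
Unset Strict Implicit.
Unset Printing Implicit Defensive.
Import Order.TTheory GRing.Theory Num.Theory.
Local Open Scope ring_scope.

Arguments vec2 (a b)%_ring_scope.

Lemma hidden_block d1 d2 W1 W2 (A1 : 'M[RR]_(d1, W1)) (A2 : 'M[RR]_(d2, W2))
    b1 b2 Ah1 Ah2 bh1 bh2 k (u1 : 'rV_d1) (u2 : 'rV_d2) :
  hidden (block_mx A1 0 0 A2) (row_mx b1 b2)
    (fun i => block_mx (Ah1 i) 0 0 (Ah2 i)) (fun i => row_mx (bh1 i) (bh2 i))
    k (row_mx u1 u2) =
  row_mx (hidden A1 b1 Ah1 bh1 k u1) (hidden A2 b2 Ah2 bh2 k u2).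
Proof.
elim: k => [|k IH] /=;
  by rewrite ?IH mul_row_block !mulmx0 addr0 add0r add_row_mx /relu_vec map_row_mx.
Qed.

Lemma Upsilon_row_mx W1 W2 L d1 d2 N1 N2
    (f1 : 'rV_d1 -> 'rV_N1) (f2 : 'rV_d2 -> 'rV_N2) :
  Upsilon W1 L d1 N1 f1 -> Upsilon W2 L d2 N2 f2 ->
  Upsilon (W1 + W2) L (d1 + d2) (N1 + N2)
    (fun v => row_mx (f1 (lsubmx v)) (f2 (rsubmx v))).
Proof.
case: L => [|L] /=.
- move=> [A1 [b1 f1E]] [A2 [b2 f2E]].
  exists (block_mx A1 0 0 A2), (row_mx b1 b2) => v.
  by rewrite -{3}(hsubmxK v) mul_row_block !mulmx0 addr0 add0r add_row_mx f1E f2E.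
- move=> [A1 [b1 [Ah1 [bh1 [Ao1 [bo1 f1E]]]]]] [A2 [b2 [Ah2 [bh2 [Ao2 [bo2 f2E]]]]]].
  exists (block_mx A1 0 0 A2), (row_mx b1 b2),
    (fun i => block_mx (Ah1 i) 0 0 (Ah2 i)), (fun i => row_mx (bh1 i) (bh2 i)),
    (block_mx Ao1 0 0 Ao2), (row_mx bo1 bo2) => v.
  rewrite -{3}(hsubmxK v) hidden_block mul_row_block !mulmx0 addr0 add0r.
  by rewrite add_row_mx f1E f2E.
Qed.

Lemma vec2_eta (v : 'rV[RR]_2) : v = vec2 (v 0 0) (v 0 1).
Proof. by apply/rowP => -[[|[|//]] j]; rewrite !mxE; congr (v _ _); apply: val_inj. Qed.

Lemma vec2E0 a b : vec2 a b 0 0 = a. Proof. by rewrite mxE. Qed.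
Lemma vec2E1 a b : vec2 a b 0 1 = b. Proof. by rewrite mxE. Qed.

Lemma EmapE t : Emap t = if t <= 1/3 then vec2 (3 * t) (3 * t)
  else if t <= 2/3 then vec2 1 (2 - 3 * t) else vec2 (3 - 3 * t) 0.
Proof. by []. Qed.

Lemma rmapE s : 0 <= s <= 1 ->
  rmap s = if s < 1/2 then 2 * s else if s < 1 then 2 * s - 1 else 1.
Proof.
move=> /andP[s0 s1]; rewrite /rmap; case: (ltP s 1) => hs1; last first.
  by case: ltP => //; lra.
case: ltP => hs2.
- rewrite (@floor_def _ _ 0) ?mulr0z ?subr0 // add0r mulr1z; apply/andP; lra.
- rewrite (@floor_def _ _ 1) ?mulr1z // -[1 + 1]/(2%:Z) -[_%:~R]/(2%:R).
  apply/andP; lra.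
Qed.

(* Case-splits on every comparison [if a <= b]/[if a < b] whose sides are
   if-free, innermost first, discarding the branches [lra] refutes. *)
Ltac if_free t :=
  lazymatch t with context[if _ then _ else _] => fail | _ => idtac end.
Ltac split_ifs := repeat (match goal with
  | |- context [if ?a <= ?b then _ else _] =>
      if_free a; if_free b; case: (leP a b) => ?
  | |- context [if ?a < ?b then _ else _] =>
      if_free a; if_free b; case: (ltP a b) => ?
  end; try (exfalso; lra)).

Lemma Emap_ge0 s : 0 <= s <= 1 -> 0 <= Emap s 0 0 /\ 0 <= Emap s 0 1.
Proof. move=> /andP[? ?]; rewrite EmapE; split_ifs; rewrite !vec2E0 !vec2E1; lra. Qed.

Lemma rmap01 s : 0 <= s <= 1 -> 0 <= rmap s <= 1.
Proof. move=> hs; rewrite rmapE //; case/andP: hs => ? ?; split_ifs; apply/andP; lra. Qed.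

Lemma iter_rmap01 n s : 0 <= s <= 1 -> 0 <= iter n rmap s <= 1.
Proof. by move=> hs; elim: n => //= n; apply: rmap01. Qed.

Lemma iter_semiconj F n t : (forall s, 0 <= s <= 1 -> F (Emap s) = Emap (rmap s)) ->
  0 <= t <= 1 -> iter n F (Emap t) = Emap (iter n rmap t).
Proof. by move=> FE ht; elim: n => //= n ->; apply/FE/iter_rmap01. Qed.

Definition relu (a : RR) : RR := Num.max a 0.

Definition row7 (a0 a1 a2 a3 a4 a5 a6 : RR) : 'rV[RR]_7 :=
  \row_(j < 7) nth 0 [:: a0; a1; a2; a3; a4; a5; a6] j.

Lemma relu_row7 a0 a1 a2 a3 a4 a5 a6 :
  relu_vec (row7 a0 a1 a2 a3 a4 a5 a6) =
  row7 (relu a0) (relu a1) (relu a2) (relu a3) (relu a4) (relu a5) (relu a6).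
Proof. by apply/rowP => -[[|[|[|[|[|[|[|//]]]]]]] j]; rewrite !mxE. Qed.

Definition readout : 'M[RR]_(7, 2) := \matrix_(i < 7, j < 2)
  nth 0 (if j == 0 :> nat then [:: 2; -2; -1; 1; 0; 0; -1]
         else [:: 0; 2; 0; 0; -1; 1; 0]) i.

Lemma readout_row7 a0 a1 a2 a3 a4 a5 a6 :
  row7 a0 a1 a2 a3 a4 a5 a6 *m readout =
  vec2 (2 * a0 - 2 * a1 - a2 + a3 - a6) (2 * a1 - a4 + a5).
Proof.
apply/rowP => -[[|[|//]] j]; rewrite !mxE !big_ord_recr big_ord0 /= !mxE /=; lra.
Qed.

Definition first_mx : 'M[RR]_(1, 7) :=
  \matrix_(i < 1, j < 7) nth 0 [:: 3/2; 3/2; 3; 3; 6; 3; 3] j.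
Definition first_row : 'rV[RR]_7 := row7 0 0 (-1) 0 (-2) (-2) (-2).

Definition doubling_mx : 'M[RR]_(2, 7) := \matrix_(i < 2, j < 7)
  nth 0 (if i == 0 :> nat then [:: 1; 0; 2; -2; 2; 2; 0]
         else [:: 0; 1; 0; 4; 2; -2; 0]) j.
Definition doubling_row : 'rV[RR]_7 := row7 0 0 (-1) 0 (-2) (-1) 0.

Definition copy_mx : 'M[RR]_(2, 7) := \matrix_(i < 2, j < 7)
  nth 0 (if i == 0 :> nat then [:: 1/2; 0; 0; 0; 0; 0; 0]
         else [:: 1/2; 1/2; 0; 0; 0; 0; 0]) j.

Lemma first_layerE (u : 'rV[RR]_1) : u *m first_mx + first_row =
  row7 (3/2 * u 0 0) (3/2 * u 0 0) (3 * u 0 0 - 1) (3 * u 0 0) (6 * u 0 0 - 2)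
       (3 * u 0 0 - 2) (3 * u 0 0 - 2).
Proof.
apply/rowP => -[[|[|[|[|[|[|[|//]]]]]]] j]; rewrite !mxE big_ord1 /= !mxE /=; lra.
Qed.

Lemma doubling_layerE p q : vec2 p q *m doubling_mx + doubling_row =
  row7 p q (2 * p - 1) (4 * q - 2 * p) (2 * p + 2 * q - 2) (2 * p - 2 * q - 1) 0.
Proof.
apply/rowP => -[[|[|[|[|[|[|[|//]]]]]]] j];
  rewrite !mxE !big_ord_recr big_ord0 /= !mxE /=; lra.
Qed.

Lemma copy_layerE p q : vec2 p q *m copy_mx = row7 (p/2 + q/2) (q/2) 0 0 0 0 0.
Proof.
apply/rowP => -[[|[|[|[|[|[|[|//]]]]]]] j];
  rewrite !mxE !big_ord_recr big_ord0 /= !mxE /=; lra.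
Qed.

Lemma first_layer_readout (u : 'rV[RR]_1) : 0 <= u 0 0 <= 1 ->
  relu_vec (u *m first_mx + first_row) *m readout = Emap (u 0 0).
Proof.
move=> /andP[? ?]; rewrite first_layerE relu_row7 readout_row7 EmapE /relu.
by rewrite /Order.max; split_ifs; congr vec2; lra.
Qed.

Lemma doubling_layer_readout s : 0 <= s <= 1 ->
  relu_vec (Emap s *m doubling_mx + doubling_row) *m readout = Emap (rmap s).
Proof.
move=> hs; rewrite {1}(vec2_eta (Emap s)) doubling_layerE relu_row7 readout_row7.
rewrite rmapE //; case/andP: hs => ? ?; rewrite !EmapE; split_ifs.
all: rewrite !vec2E0 !vec2E1 /relu /Order.max; congr vec2; split_ifs; lra.
Qed.

Lemma copy_layer_readout (v : 'rV[RR]_2) : 0 <= v 0 0 -> 0 <= v 0 1 ->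
  relu_vec (v *m copy_mx) *m readout = v.
Proof.
move=> ? ?; rewrite {1}(vec2_eta v) copy_layerE relu_row7 readout_row7 /relu.
by rewrite [RHS]vec2_eta /Order.max; split_ifs; congr vec2; lra.
Qed.

(* The hidden layer [k] reads out the previous layer, then doubles for the
   first [n] steps and copies afterwards. *)
Definition step_mx (n k : nat) : 'M[RR]_7 :=
  readout *m (if (k < n)%N then doubling_mx else copy_mx).
Definition step_row (n k : nat) : 'rV[RR]_7 :=
  if (k < n)%N then doubling_row else 0.

Lemma hidden_readout n k (u : 'rV[RR]_1) : 0 <= u 0 0 <= 1 ->
  hidden first_mx first_row (step_mx n) (step_row n) k u *m readout =
  Emap (iter (minn k n) rmap (u 0 0)).
Proof.
move=> hu; elim: k => [|k IH] /=; first by rewrite min0n first_layer_readout.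
rewrite /step_mx /step_row mulmxA IH; case: ltnP => hk.
- by rewrite (minn_idPl hk) doubling_layer_readout ?iter_rmap01.
- rewrite addr0 (minn_idPr (leqW hk)).
  have [? ?] := Emap_ge0 (iter_rmap01 n hu).
  exact: copy_layer_readout.
Qed.

Lemma Upsilon_Emap_iter_rmap n L : (n < L)%N ->
  exists g, Upsilon 7 L 1 2 g /\
    forall u : 'rV[RR]_1, 0 <= u 0 0 <= 1 -> g u = Emap (iter n rmap (u 0 0)).
Proof.
case: L => // L; rewrite ltnS => nL.
exists (fun u => hidden first_mx first_row (step_mx n) (step_row n) L u *m readout + 0).
split; first by exists first_mx, first_row, (step_mx n), (step_row n), readout, 0.
by move=> u hu; rewrite addr0 hidden_readout // (minn_idPr nL).
Qed.

Theorem mainTheorem7 :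
  forall k : nat,
  exists C0 C1 : nat, (0 < C0)%N /\ (0 < C1)%N /\
  forall F : 'rV[RR]_2 -> 'rV[RR]_2,
    cpwl_pieces k F ->
    (forall t : RR, 0 <= t <= 1 -> F (Emap t) = Emap (rmap t)) ->
    forall n : nat,
      exists g : 'rV[RR]_2 -> 'rV[RR]_4,
        Upsilon C0 (C1 * maxn n 1)%N 2 4 g /\
        forall x y : RR, 0 <= x <= 1 -> 0 <= y <= 1 ->
          g (vec2 x y) = zn F n x y.
Proof.
move=> k; exists (7 + 7)%N, 2%N; do 2!split => //.
move=> F _ FE n.
have nL : (n < 2 * maxn n 1)%N by lia.
have [g [Ug gE]] := Upsilon_Emap_iter_rmap nL.
exists (fun v : 'rV_(1 + 1) => row_mx (g (lsubmx v)) (g (rsubmx v))).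
split; first exact: (Upsilon_row_mx Ug Ug).
by move=> x y hx hy; rewrite !gE ?mxE // /zn !iter_semiconj.
Qed.
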